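(* Let $p>3$ be a prime, $q=p^h$, and $a,b\in\mathbb{F}_{q^2}^*$. If $\deg\gcd(N_{a,b},D_{a,b})=1$, then $f_{a,b}(X)=X(1+aX^{q(q-1)}+bX^{2(q-1)})$ is not a permutation polynomial of $\mathbb{F}_{q^2}$.
   Context: A polynomial $f\in\mathbb{F}_{q^2}[X]$ is a permutation polynomial of $\mathbb{F}_{q^2}$ if $x\mapsto f(x)$ is a bijection of $\mathbb{F}_{q^2}$. $N_{a,b}(X)=a^qX^3+X^2+b^q$ and $D_{a,b}(X)=bX^3+X+a$. *)

From HB Require Import structures.
From mathcomp Require Import all_boot all_order all_algebra all_field.
Set Implicit Arguments. Unset Strict Implicit. Unset Printing Implicit Defensive.
Import GRing.Theory.
Local Open Scope ring_scope.

Definition perm_poly (F : finFieldType) (f : {poly F}) : Prop :=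
  bijective (fun x : F => f.[x]).

Definition Npoly (F : finFieldType) (q : nat) (a b : F) : {poly F} :=
  (a ^+ q) *: 'X^3 + 'X^2 + (b ^+ q)%:P.

Definition Dpoly (F : finFieldType) (a b : F) : {poly F} :=
  b *: 'X^3 + 'X + a%:P.

Definition fpoly (F : finFieldType) (q : nat) (a b : F) : {poly F} :=
  'X * (1 + a *: 'X^(q * (q - 1)) + b *: 'X^(2 * (q - 1))).

From HB Require Import structures.
From mathcomp Require Import all_boot all_order all_fingroup all_algebra all_solvable all_field.
From mathcomp Require Import ring zify.
Set Implicit Arguments.
Unset Strict Implicit.
Unset Printing Implicit Defensive.

Import GRing.Theory.
Local Open Scope ring_scope.

(* The degree-one gcd of N and D has a unique root r, and r <> 0 since D(0) = a.
   The map x |-> (x^q)^-1 sends roots of D to roots of N and vice versa, so it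
   fixes r, i.e. r^(q+1) = 1.  The multiplicative group of F_(q^2) being cyclic
   of order (q-1)(q+1), r = x^(q-1) for some x <> 0, and then
   f(x) = x r^-1 D(r) = 0 = f(0). *)

Lemma size2_rootP (F : fieldType) (g : {poly F}) :
  size g = 2%N -> exists c, forall x, root g x = (x == c).
Proof.
move=> sg; have g1 : g`_1 != 0.
  by rewrite -[1%N]/(2.-1) -sg -lead_coefE lead_coef_eq0 -size_poly_eq0 sg.
exists (- g`_0 / g`_1) => x.
rewrite rootE horner_coef sg !big_ord_recl big_ord0 /= expr0 expr1 mulr1 addr0.
rewrite -[x == _](inj_eq (mulIf g1)) divfK //.
by rewrite addrC addr_eq0 mulrC.
Qed.

Lemma unity_root_is_power (F : finFieldType) (m n : nat) (r : F) :
  #|F| = (m * n).+1 -> r ^+ n = 1 -> exists2 x : F, x != 0 & x ^+ m = r.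
Proof.
move=> cardF rn1.
have n_gt0 : (0 < n)%N.
  by rewrite lt0n; apply: contraTneq (finNzRing_gt1 F) => n0; rewrite cardF n0 muln0.
have Ur : r \is a GRing.unit.
  by rewrite unitfE; apply: contra_eq_neq rn1 => ->; rewrite expr0n gtn_eqF // eq_sym oner_eq0.
pose ur : {unit F} := FinRing.Unit Ur.
have /cyclicP [g defU] := field_unit_group_cyclic [group of [set: {unit F}]].
have /cycleP [k urE] : ur \in <[g]>%g by rewrite -defU inE.
have ord_g : #[g]%g = (m * n)%N by rewrite /order -defU card_finField_unit cardF.
have : (#[g]%g %| k * n)%N.
  rewrite order_dvdn expgM -urE; apply/eqP/val_inj.
  by rewrite FinRing.val_unitX /= rn1.
rewrite ord_g dvdn_pmul2r // => /dvdnP [l kE].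
exists (val (g ^+ l)%g); first by rewrite -unitfE (valP (g ^+ l)%g).
by rewrite -FinRing.val_unitX -expgM -kE -urE.
Qed.

Lemma hornerNpoly (F : finFieldType) (q : nat) (a b x : F) :
  (Npoly q a b).[x] = a ^+ q * x ^+ 3 + x ^+ 2 + b ^+ q.
Proof. by rewrite !hornerD hornerZ !hornerXn hornerC. Qed.

Lemma hornerDpoly (F : finFieldType) (a b x : F) :
  (Dpoly a b).[x] = b * x ^+ 3 + x + a.
Proof. by rewrite !hornerD hornerZ hornerXn hornerX hornerC. Qed.

Lemma hornerfpoly (F : finFieldType) (q : nat) (a b x : F) :
  (fpoly q a b).[x] = x * (1 + a * x ^+ (q * (q - 1)) + b * x ^+ (2 * (q - 1))).
Proof. by rewrite /fpoly mulrC hornerMX !hornerD !hornerZ !hornerXn hornerC mulrC. Qed.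

Section FrobeniusSwap.

Variables (F : finFieldType) (q : nat) (a b : F).
Hypothesis q_gt0 : (0 < q)%N.
Hypothesis exprqD : forall x y : F, (x + y) ^+ q = x ^+ q + y ^+ q.
Hypothesis exprqK : forall x : F, x ^+ q ^+ q = x.

Lemma Dpoly_Frobenius (x : F) :
  (Dpoly a b).[x] ^+ q = b ^+ q * (x ^+ q) ^+ 3 + x ^+ q + a ^+ q.
Proof. by rewrite hornerDpoly !exprqD exprMn exprAC. Qed.

Lemma root_Npoly_Frobenius_inv (x : F) :
  x != 0 -> root (Dpoly a b) x -> root (Npoly q a b) (x ^+ q)^-1.
Proof.
move=> x_neq0 /eqP Dx; have t_neq0 : x ^+ q != 0 by rewrite expf_neq0.
rewrite rootE; have -> : (Npoly q a b).[(x ^+ q)^-1] = (x ^+ q) ^- 3 * (Dpoly a b).[x] ^+ q.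
  by rewrite Dpoly_Frobenius hornerNpoly; field.
by rewrite Dx expr0n gtn_eqF // mulr0.
Qed.

Lemma root_Dpoly_Frobenius_inv (x : F) :
  x != 0 -> root (Npoly q a b) x -> root (Dpoly a b) (x ^+ q)^-1.
Proof.
move=> x_neq0 /eqP Nx.
have : (Dpoly a b).[(x ^+ q)^-1] ^+ q = x ^- 3 * (Npoly q a b).[x].
  by rewrite Dpoly_Frobenius !exprVn exprqK hornerNpoly; field.
by rewrite Nx mulr0 rootE => /eqP; rewrite expf_eq0 q_gt0.
Qed.

End FrobeniusSwap.

Lemma root_fpoly (F : finFieldType) (q : nat) (a b : F) (x : F) :
  (x ^+ (q - 1)) ^+ q.+1 = 1 -> root (Dpoly a b) (x ^+ (q - 1)) ->
  root (fpoly q a b) x.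
Proof.
set r := x ^+ (q - 1) => rq1 /eqP Dr.
have r_neq0 : r != 0 by apply: contra_eq_neq rq1 => ->; rewrite expr0n eq_sym oner_eq0.
have rqE : r ^+ q = r^-1 by apply: (mulIf r_neq0); rewrite -exprSr rq1 mulVf.
rewrite rootE; have -> : (fpoly q a b).[x] = x * r^-1 * (Dpoly a b).[r].
  by rewrite hornerfpoly hornerDpoly mulnC exprM mulnC exprM -/r rqE; field.
by rewrite Dr mulr0.
Qed.

Theorem mainTheorem6 (p h : nat) (F : finFieldType) (a b : F) :
  prime p -> (3 < p)%N -> (0 < h)%N ->
  #|F| = ((p ^ h) ^ 2)%N ->
  a != 0 -> b != 0 ->
  size (gcdp (Npoly (p ^ h) a b) (Dpoly a b)) = 2%N ->
  ~ perm_poly (fpoly (p ^ h) a b).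
Proof.
move=> p_prime _ _ cardF a_neq0 _ size_gcd [f fK _].
have p_char : p \in [pchar F] by apply: (card_finPcharP (n := (h * 2)%N)); rewrite // expnM.
set q := (p ^ h)%N in cardF size_gcd *.
have q_gt0 : (0 < q)%N by rewrite expn_gt0 prime_gt0.
have exprqD (x y : F) : (x + y) ^+ q = x ^+ q + y ^+ q.
  by apply: exprDn_pchar; rewrite pnatX (pnatE _ (pcharf_prime p_char)) p_char.
have exprqK (x : F) : x ^+ q ^+ q = x by rewrite -exprM -{2}(expf_card x) cardF mulnn.
have [r rootE_gcd] := size2_rootP size_gcd.
have /andP [Nr Dr] : root (Npoly q a b) r && root (Dpoly a b) r.
  by rewrite -root_gcd rootE_gcd.
have r_neq0 : r != 0.
  by apply: contraTneq Dr => ->; rewrite rootE hornerDpoly expr0n mulr0 !add0r.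
have /eqP rqE : (r ^+ q)^-1 == r.
  by rewrite -rootE_gcd root_gcd root_Npoly_Frobenius_inv ?root_Dpoly_Frobenius_inv //.
have rq1 : r ^+ q.+1 = 1 by rewrite exprS -{1}rqE mulVf // expf_neq0.
have cardF' : #|F| = ((q - 1) * q.+1).+1 by rewrite cardF; nia.
have [x x_neq0 xr] := unity_root_is_power cardF' rq1.
have fx0 : root (fpoly q a b) x by rewrite root_fpoly ?xr.
have f0 : root (fpoly q a b) 0 by rewrite rootE hornerfpoly mul0r.
move: x_neq0; rewrite -(fK x) -(fK 0) /=.
by move: fx0 f0; rewrite !rootE => /eqP-> /eqP->; rewrite eqxx.
Qed.
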